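(* Consider problem $(\mathcal{P})$ under Assumptions A1 and A2, and let $\{x_k\},\{y_k\},\{d_k\}$ be generated by Algorithm BDCA (see context). Then for every $k$: (i) $\phi(y_k)\le \phi(x_k)-\rho\|d_k\|^2$; (ii) $\phi'(y_k;d_k)\le -\rho\|d_k\|^2$, where $\phi'(y;d)$ denotes the one-sided directional derivative; (iii) if $I(y_k)\subseteq I(x_k)$, then there exists $\delta_k>0$ such that for all $\lambda\in[0,\delta_k]$ one has $y_k+\lambda d_k\in\mathcal{F}$ and $\phi(y_k+\lambda d_k)\le \phi(y_k)-\alpha\lambda^2\|d_k\|^2$. Consequently, the backtracking loop of the algorithm terminates after finitely many reductions.
   Context: Problem $(\mathcal{P})$: minimize $\phi(x):=g(x)-h(x)$ subject to $x\in\mathcal{F}:=\{x\in\mathbb{R}^n:\langle a_i,x\rangle\le b_i,\ i=1,\dots,p\}$, where $g,h:\mathbb{R}^n\to\mathbb{R}\cup\{+\infty\}$ are proper, closed, convex, with conventions $(+\infty)-(+\infty)=+\infty$, $(+\infty)-\lambda=+\infty$, $\lambda-(+\infty)=-\infty$ for real $\lambda$. Assumption A1: $g$ and $h$ are strongly convex on their domains with the same parameter $\rho>0$ (i.e. $g-\frac\rho2\|\cdot\|^2$ and $h-\frac\rho2\|\cdot\|^2$ are convex). Assumption A2: $\partial h(x)\neq\emptyset$ for all $x\in\operatorname{dom}h$; $g$ is continuously differentiable on an open set containing $\operatorname{dom}h$; and $\inf_{x\in\mathcal{F}}\phi(x)>-\infty$. It is implicitly assumed that the iterates below are well defined (they lie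 in $\operatorname{dom}h$). For $\bar x\in\mathcal{F}$, $I(\bar x):=\{i:\langle a_i,\bar x\rangle=b_i\}$. Algorithm BDCA: input $x_0\in\mathcal{F}$, $\alpha>0$, $\beta\in(0,1)$. At iteration $k$: choose $u_k\in\partial h(x_k)$ and let $y_k$ be the unique minimizer of $g(x)-\langle u_k,x\rangle$ over $\mathcal{F}$; set $d_k:=y_k-x_k$; if $d_k=0$ stop and return $x_k$. If $I(y_k)\subseteq I(x_k)$: choose any $\bar\lambda_k\ge 0$, set $\lambda_k:=\bar\lambda_k$ and reduce it (to some value in $[0,\bar\lambda_k]$) so that $y_k+\lambda_kd_k\in\mathcal{F}$; then while $\phi(y_k+\lambda_kd_k)>\phi(y_k)-\alpha\lambda_k^2\|d_k\|^2$, replace $\lambda_k$ by $\beta\lambda_k$. Otherwise set $\lambda_k:=0$. Set $x_{k+1}:=y_k+\lambda_kd_k$ and continue with $k+1$. *)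

From Stdlib Require Import Reals.
From mathcomp Require Import ssreflect ssrfun ssrbool eqtype ssrnat fintype bigop.
Set Implicit Arguments.
Unset Strict Implicit.
Unset Printing Implicit Defensive.
Open Scope R_scope.

Definition vec (n : nat) := 'I_n -> R.
Definition vadd {n} (x y : vec n) : vec n := fun i => x i + y i.
Definition vsub {n} (x y : vec n) : vec n := fun i => x i - y i.
Definition vscale {n} (t : R) (x : vec n) : vec n := fun i => t * x i.
Definition vzero {n} : vec n := fun _ => 0.
Definition dot {n} (x y : vec n) : R := \big[Rplus/0]_(i < n) (x i * y i).
Definition norm2 {n} (x : vec n) : R := dot x x.
Definition norm {n} (x : vec n) : R := sqrt (norm2 x).

Inductive ER := Fin (r : R) | PInf | MInf.

Definition ER_le (a b : ER) : Prop :=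
  match a, b with
  | MInf, _ => True
  | _, PInf => True
  | Fin x, Fin y => x <= y
  | _, _ => False
  end.
Definition ER_lt (a b : ER) : Prop := ER_le a b /\ a <> b.

Definition ER_sub_real (a : ER) (r : R) : ER :=
  match a with Fin x => Fin (x - r) | PInf => PInf | MInf => MInf end.

(* a - b with the paper's conventions (+oo)-(+oo)=+oo, (+oo)-l=+oo,
   l-(+oo)=-oo.  Cases involving -oo never occur for proper functions;
   they are fixed arbitrarily. *)
Definition ER_minus (a b : ER) : ER :=
  match a, b with
  | PInf, _ => PInf
  | Fin x, Fin y => Fin (x - y)
  | Fin _, PInf => MInf
  | Fin _, MInf => PInf
  | MInf, _ => MInf
  end.

Definition in_dom {n} (f : vec n -> ER) (x : vec n) : Prop :=
  exists r, f x = Fin r.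

Definition proper_fun {n} (f : vec n -> ER) : Prop :=
  (forall x, f x <> MInf) /\ (exists x, f x <> PInf).

Definition convex_fun {n} (f : vec n -> ER) : Prop :=
  forall (x y : vec n) (a b t : R), 0 <= t <= 1 ->
    ER_le (f x) (Fin a) -> ER_le (f y) (Fin b) ->
    ER_le (f (vadd (vscale t x) (vscale (1 - t) y))) (Fin (t * a + (1 - t) * b)).

(* closed: the epigraph is closed (its complement is open) *)
Definition closed_fun {n} (f : vec n -> ER) : Prop :=
  forall (x : vec n) (a : R), ~ ER_le (f x) (Fin a) ->
    exists eps, 0 < eps /\
      forall (y : vec n) (b : R), norm (vsub y x) < eps -> Rabs (b - a) < eps ->
        ~ ER_le (f y) (Fin b).

Definition strongly_convex {n} (rho : R) (f : vec n -> ER) : Prop :=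
  convex_fun (fun x => ER_sub_real (f x) (rho / 2 * norm2 x)).

Definition subgrad {n} (f : vec n -> ER) (x u : vec n) : Prop :=
  exists r, f x = Fin r /\
    forall y, ER_le (Fin (r + dot u (vsub y x))) (f y).

Definition open_set {n} (U : vec n -> Prop) : Prop :=
  forall x, U x -> exists eps, 0 < eps /\ forall y, norm (vsub y x) < eps -> U y.

Definition C1_on_open_superset {n} (f : vec n -> ER) (S : vec n -> Prop) : Prop :=
  exists (U : vec n -> Prop) (grad : vec n -> vec n),
    open_set U /\ (forall x, S x -> U x) /\
    (forall x, U x -> exists r, f x = Fin r /\
       forall eps, 0 < eps -> exists del, 0 < del /\
         forall v, norm v < del -> exists r', f (vadd x v) = Fin r' /\
           Rabs (r' - r - dot (grad x) v) <= eps * norm v) /\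
    (forall x, U x -> forall eps, 0 < eps -> exists del, 0 < del /\
       forall y, U y -> norm (vsub y x) < del -> norm (vsub (grad y) (grad x)) < eps).

(* one-sided directional derivative f'(y; d) = L  (limit as t -> 0+ of
   (f(y + t d) - f(y)) / t, in the extended reals); requires f(y) finite *)
Definition ER_quot (v : ER) (c t : R) : ER :=
  match v with Fin r => Fin ((r - c) / t) | PInf => PInf | MInf => MInf end.

Definition dir_deriv {n} (f : vec n -> ER) (y d : vec n) (L : ER) : Prop :=
  exists fy, f y = Fin fy /\
  let q := fun t => ER_quot (f (vadd y (vscale t d))) fy t in
  match L with
  | Fin l => forall eps, 0 < eps -> exists del, 0 < del /\
       forall t, 0 < t < del -> exists r, q t = Fin r /\ Rabs (r - l) < eps
  | PInf => forall M, exists del, 0 < del /\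
       forall t, 0 < t < del -> ER_lt (Fin M) (q t)
  | MInf => forall M, exists del, 0 < del /\
       forall t, 0 < t < del -> ER_lt (q t) (Fin M)
  end.

Definition feasible {n p} (a : 'I_p -> vec n) (b : 'I_p -> R) (x : vec n) : Prop :=
  forall i, dot (a i) x <= b i.

(* I(y) subset of I(x), active index sets *)
Definition active_subset {n p} (a : 'I_p -> vec n) (b : 'I_p -> R) (y x : vec n) : Prop :=
  forall i, dot (a i) y = b i -> dot (a i) x = b i.

Definition phi {n} (g h : vec n -> ER) (x : vec n) : ER := ER_minus (g x) (h x).

Definition unique_argmin {n p} (a : 'I_p -> vec n) (b : 'I_p -> R)
  (f : vec n -> ER) (y : vec n) : Prop :=
  feasible a b y /\ (forall z, feasible a b z -> ER_le (f y) (f z)) /\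
  (forall z, feasible a b z -> ER_le (f z) (f y) -> z = y).

Definition accepted {n} (g h : vec n -> ER) (alpha : R) (y d : vec n) (lam : R) : Prop :=
  ER_le (phi g h (vadd y (vscale lam d)))
        (ER_sub_real (phi g h y) (alpha * lam ^ 2 * norm2 d)).

(* A run of Algorithm BDCA: x k, u k, y k are the iterates, d_k = y k - x k,
   lam0 k the (feasible) initial trial step, lam k the accepted step.
   If d_k = 0 the algorithm stops; we then extend the sequence constantly. *)
Definition bdca_run {n p} (a : 'I_p -> vec n) (b : 'I_p -> R) (g h : vec n -> ER)
  (alpha beta : R) (x u y : nat -> vec n) (lam lam0 : nat -> R) : Prop :=
  feasible a b (x 0%nat) /\
  forall k : nat,
    let d := vsub (y k) (x k) in
    in_dom h (x k) /\
    subgrad h (x k) (u k) /\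
    unique_argmin a b (fun z => ER_sub_real (g z) (dot (u k) z)) (y k) /\
    (d = vzero -> x (S k) = x k) /\
    (d <> vzero ->
      (active_subset a b (y k) (x k) ->
         0 <= lam0 k /\ feasible a b (vadd (y k) (vscale (lam0 k) d)) /\
         exists j : nat, lam k = beta ^ j * lam0 k /\
           accepted g h alpha (y k) d (lam k) /\
           forall i : nat, (i < j)%N ->
             ~ accepted g h alpha (y k) d (beta ^ i * lam0 k)) /\
      (~ active_subset a b (y k) (x k) -> lam k = 0) /\
      x (S k) = vadd (y k) (vscale (lam k) d)).

From Stdlib Require Import Reals Lra Psatz Classical FunctionalExtensionality.
From HB Require Import structures.
From mathcomp Require Import ssreflect ssrfun ssrbool eqtype ssrnat fintype bigop.
Open Scope R_scope.
Set Implicit Arguments.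
Unset Strict Implicit.

(* Fix an iteration with X = x_k, U in dh(X), Y = y_k the minimiser of
   g - <U,.> over F, and D = Y - X.
   (i)  Strong convexity of h at X along its subgradient U gives
        h(Y) >= h(X) + <U,D> + rho/2 |D|^2, and strong convexity of
        g - <U,.> at its minimiser Y over the convex set F gives
        g(Y) - <U,Y> + rho/2 |D|^2 <= g(X) - <U,X>; adding them yields (i).
   (ii) g is Frechet differentiable at Y, so its directional derivative is
        <grad g(Y),D>, and first-order optimality of Y gives
        <grad g(Y),D> <= <U,D>.  The difference quotients of the convex h
        along D are nondecreasing and bounded below by <U,D> + rho |D|^2,
        so h'(Y;D) exists (possibly +oo) and is at least that bound.
        Subtracting, phi'(Y;D) <= -rho |D|^2.
   (iii) A negative directional derivative makes the Armijo test hold for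
        all small steps; if I(Y) is contained in I(X), a short segment from Y
        along D stays feasible; and backtracking l0, beta l0, beta^2 l0, ...
        eventually enters any interval [0, delta].
   The only facts needed about the run itself are that the iterates are
   feasible and that y_k lies in dom h (which follows from x_{k+1} in dom h). *)

(* (R, +, 0) as a commutative monoid, so that the bigop lemmas apply to dot. *)
HB.instance Definition _ := Monoid.isComLaw.Build R 0 Rplus
  (fun x y z => esym (Rplus_assoc x y z)) Rplus_comm Rplus_0_l.

Lemma sumD n (F G : 'I_n -> R) :
  \big[Rplus/0]_(i < n) (F i + G i)
  = \big[Rplus/0]_(i < n) F i + \big[Rplus/0]_(i < n) G i.
Proof. exact: big_split. Qed.

Lemma sumZ n c (F : 'I_n -> R) :
  \big[Rplus/0]_(i < n) (c * F i) = c * \big[Rplus/0]_(i < n) F i.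
Proof.
apply: (big_rec2 (fun s1 s2 => s1 = c * s2)); first ring.
by move=> i y1 y2 _ ->; ring.
Qed.

Lemma sumN n (F : 'I_n -> R) :
  \big[Rplus/0]_(i < n) (- F i) = - \big[Rplus/0]_(i < n) F i.
Proof.
apply: (big_rec2 (fun s1 s2 => s1 = - s2)); first ring.
by move=> i y1 y2 _ ->; ring.
Qed.

Lemma sum_ge_term n (F : 'I_n -> R) j :
  (forall i, 0 <= F i) -> F j <= \big[Rplus/0]_(i < n) F i.
Proof.
move=> HF; rewrite (bigD1 j) //=.
have : 0 <= \big[Rplus/0]_(i < n | i != j) F i.
  apply: (big_ind (fun s => 0 <= s)); [lra | move=> s1 s2; lra | move=> i _; exact: HF].
by move=> Hrest; rewrite -{1}(Rplus_0_r (F j)); apply: Rplus_le_compat_l.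
Qed.

Ltac vec_ext := apply: functional_extensionality => i;
  rewrite /vadd /vsub /vscale /vzero; ring.

Lemma dot_comm n (x y : vec n) : dot x y = dot y x.
Proof. by rewrite /dot; apply: eq_bigr => i _; ring. Qed.

Lemma dot_addr n (z x y : vec n) : dot z (vadd x y) = dot z x + dot z y.
Proof. by rewrite /dot -sumD; apply: eq_bigr => i _; rewrite /vadd; ring. Qed.

Lemma dot_subr n (z x y : vec n) : dot z (vsub x y) = dot z x - dot z y.
Proof.
rewrite /dot /Rminus -sumN -sumD.
by apply: eq_bigr => i _; rewrite /vsub; ring.
Qed.

Lemma dot_scaler n t (z x : vec n) : dot z (vscale t x) = t * dot z x.
Proof. by rewrite /dot -sumZ; apply: eq_bigr => i _; rewrite /vscale; ring. Qed.

Lemma dot_scalel n t (x z : vec n) : dot (vscale t x) z = t * dot x z.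
Proof. by rewrite dot_comm dot_scaler dot_comm. Qed.

Lemma norm2_ge0 n (x : vec n) : 0 <= norm2 x.
Proof.
apply: (big_ind (fun s => 0 <= s)); [lra | move=> s1 s2; lra | move=> i _; nra].
Qed.

Lemma norm2_pos n (x : vec n) : x <> vzero -> 0 < norm2 x.
Proof.
move=> Hx.
have [i Hi] : exists i, x i <> 0.
  apply: NNPP => Hall; apply: Hx; apply: functional_extensionality => i.
  by apply: NNPP => Hi; apply: Hall; exists i.
have := @sum_ge_term n (fun i => x i * x i) i (fun j => ltac:(nra)).
rewrite /norm2 /dot; nra.
Qed.

Lemma norm2_zero n : norm2 (@vzero n) = 0.
Proof. by rewrite /norm2 /dot big1 // => i _; rewrite /vzero; ring. Qed.

Lemma norm2_scale n t (x : vec n) : norm2 (vscale t x) = t * t * norm2 x.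
Proof. by rewrite /norm2 dot_scalel dot_scaler; ring. Qed.

Lemma norm2_sub n (x y : vec n) : norm2 (vsub x y) = norm2 x - 2 * dot x y + norm2 y.
Proof.
rewrite /norm2 !dot_subr (dot_comm (vsub x y)) (dot_comm (vsub x y)) !dot_subr.
by rewrite (dot_comm y x); ring.
Qed.

Lemma norm2_comb n t s (x y : vec n) :
  norm2 (vadd (vscale t x) (vscale s y))
  = t * t * norm2 x + 2 * t * s * dot x y + s * s * norm2 y.
Proof.
rewrite /norm2 !dot_addr (dot_comm _ (vscale t x)) (dot_comm _ (vscale s y)).
by rewrite !dot_addr !dot_scaler !dot_scalel (dot_comm y x); ring.
Qed.

Lemma norm_ge0 n (x : vec n) : 0 <= norm x.
Proof. exact: sqrt_pos. Qed.

Lemma norm_scale n t (x : vec n) : norm (vscale t x) = Rabs t * norm x.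
Proof.
rewrite /norm norm2_scale sqrt_mult_alt; last nra.
by rewrite -sqrt_Rsqr_abs.
Qed.

Lemma vscale0 n (y D : vec n) : vadd y (vscale 0 D) = y.
Proof. vec_ext. Qed.

Lemma vsub_eq0 n (y x : vec n) : vsub y x = vzero -> y = x.
Proof.
move=> HD; apply: functional_extensionality => i.
by have := f_equal (fun f => f i) HD; rewrite /vsub /vzero; lra.
Qed.

(* If A <= B + t C for all small t > 0 then A <= B: the limit argument
   behind every strong-convexity inequality below. *)
Lemma le_of_le_add_small A B C : (forall t, 0 < t < 1 -> A <= B + t * C) -> A <= B.
Proof.
move=> H; apply: Rnot_lt_le => HBA.
have HC := Rabs_pos C.
set t := Rmin (1/2) ((A - B) / (2 * (Rabs C + 1))).
have Hq : t * (2 * (Rabs C + 1)) <= A - B.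
  have -> : A - B = (A - B) / (2 * (Rabs C + 1)) * (2 * (Rabs C + 1)) by field; lra.
  by apply: Rmult_le_compat_r; [lra | apply: Rmin_r].
have Ht0 : 0 < t by apply: Rmin_glb_lt; [lra | apply: Rdiv_lt_0_compat; lra].
have Ht1 : t < 1 by have := Rmin_l (1/2) ((A - B) / (2 * (Rabs C + 1))); rewrite -/t; lra.
have := H t (conj Ht0 Ht1).
have : t * C <= t * Rabs C by apply: Rmult_le_compat_l; [lra | apply: Rle_abs].
nra.
Qed.

Lemma glb_approx (E : R -> Prop) (c : R) :
  (exists z, E z) -> (forall z, E z -> c <= z) ->
  exists m, c <= m /\ (forall z, E z -> m <= z) /\
    forall eps, 0 < eps -> exists z, E z /\ z < m + eps.
Proof.
move=> [z0 Hz0] Hlb.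
pose NE z := E (- z).
have Hub : is_upper_bound NE (- c) by move=> z /Hlb; lra.
have Hne : exists z, NE z by exists (- z0); rewrite /NE Ropp_involutive.
have [m [Hm1 Hm2]] := completeness NE (ex_intro _ (- c) Hub) Hne.
exists (- m); split; first by have := Hm2 _ Hub; lra.
split.
  by move=> z Hz; have := Hm1 (- z); rewrite /NE Ropp_involutive => /(_ Hz); lra.
move=> eps Heps; apply: NNPP => Hfar.
have : is_upper_bound NE (m - eps).
  move=> z Hz; apply: Rnot_lt_le => Hlt; apply: Hfar.
  by exists (- z); split => //; lra.
by move/Hm2; lra.
Qed.

Lemma uniform_radius p (Q : 'I_p -> R -> Prop) :
  (forall i, exists e, 0 < e /\ forall l, 0 <= l <= e -> Q i l) ->
  exists e, 0 < e /\ forall i l, 0 <= l <= e -> Q i l.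
Proof.
move=> H.
suff /(_ p) [e [He He']] : forall m, exists e, 0 < e /\
    forall (i : 'I_p) l, (i < m)%N -> 0 <= l <= e -> Q i l.
  by exists e; split => // i l; apply: He'; exact: ltn_ord.
elim => [|m [e [He IH]]]; first by exists 1; split; [lra | move=> i l].
case: (ltnP m p) => Hm; last first.
  by exists e; split => // i l Hi; apply: IH; apply: leq_trans (ltn_ord i) Hm.
have [e' [He' H']] := H (Ordinal Hm).
exists (Rmin e e'); split; first by apply: Rmin_glb_lt.
move=> i l Hi Hl; have := Rmin_l e e'; have := Rmin_r e e'.
rewrite ltnS leq_eqVlt in Hi; case/orP: Hi => Hi.
- have -> : i = Ordinal Hm by apply: val_inj; exact/eqP.
  move=> *; apply: H'; lra.
- move=> *; apply: IH => //; lra.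
Qed.

Lemma div_le_iff t c x : 0 < t -> (c <= x / t <-> t * c <= x).
Proof.
move=> Ht; have Ex : x = t * (x / t) by field; lra.
by split => H; [rewrite Ex; apply: Rmult_le_compat_l; lra | nra].
Qed.

Lemma quot_le s t a b : 0 < s -> 0 < t -> a * t <= b * s -> a / s <= b / t.
Proof.
move=> Hs Ht H.
have Ea : a = s * (a / s) by field; lra.
have Eb : b = t * (b / t) by field; lra.
rewrite Ea Eb in H; apply: (Rmult_le_reg_l (s * t)); nra.
Qed.

Lemma Rabs_le_bounds x e : Rabs x <= e -> - e <= x <= e.
Proof. by split_Rabs; lra. Qed.

Lemma abs_quot_lt t x l k eps :
  0 < t -> Rabs (x - t * l) <= t * k -> k < eps -> Rabs (x / t - l) < eps.
Proof.
move=> Ht Habs Hk.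
have Ex : x = t * (x / t) by field; lra.
move: Habs; rewrite {1}Ex => /Rabs_le_bounds Habs.
apply: Rabs_def1; nra.
Qed.

Lemma pow_unit_interval (be : R) j : 0 <= be <= 1 -> 0 <= be ^ j <= 1.
Proof.
move=> Hb; elim: j => [|j IH] /=; first lra.
split; [apply: Rmult_le_pos; lra | nra].
Qed.

Lemma ER_le_weaken v a b : ER_le v (Fin a) -> a <= b -> ER_le v (Fin b).
Proof. by case: v => [r||] //=; lra. Qed.

Lemma ER_lt_finE a b : ER_lt (Fin a) (Fin b) -> a < b.
Proof. by move=> [/= Hle Hne]; case: (Rle_lt_or_eq_dec _ _ Hle) => // Heq; subst. Qed.

Lemma ER_lt_fin a b : a < b -> ER_lt (Fin a) (Fin b).
Proof. by move=> Hab; split => [/=|[E]]; lra. Qed.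

Lemma ER_quot_finE v c t r : ER_quot v c t = Fin r -> exists w, v = Fin w /\ r = (w - c) / t.
Proof. by case: v => [w||] //= [<-]; exists w. Qed.

Lemma ER_quot_le v c t M : 0 < t -> ER_le (ER_quot v c t) (Fin M) -> ER_le v (Fin (c + t * M)).
Proof.
move=> Ht; case: v => [w||] //= Hq.
have Ew : w - c = t * ((w - c) / t) by field; lra.
nra.
Qed.

Lemma strong_convex_ineq n rho (f : vec n -> ER) x y fx fy t :
  strongly_convex rho f -> f x = Fin fx -> f y = Fin fy -> 0 <= t <= 1 ->
  ER_le (f (vadd (vscale t x) (vscale (1 - t) y)))
    (Fin (t * fx + (1 - t) * fy - rho / 2 * t * (1 - t) * norm2 (vsub x y))).
Proof.
move=> Hsc Hx Hy Ht.
have := Hsc x y (fx - rho / 2 * norm2 x) (fy - rho / 2 * norm2 y) t Ht.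
rewrite /ER_sub_real Hx Hy /= => /(_ (Rle_refl _) (Rle_refl _)).
rewrite norm2_comb norm2_sub.
by case: (f _) => [r||] //= Hr; nra.
Qed.

Lemma feasible_convex n p (a : 'I_p -> vec n) b x y t :
  feasible a b x -> feasible a b y -> 0 <= t <= 1 ->
  feasible a b (vadd (vscale t x) (vscale (1 - t) y)).
Proof.
move=> Hx Hy Ht i; rewrite dot_addr !dot_scaler.
by have := Hx i; have := Hy i; nra.
Qed.

Lemma strong_subgrad_ineq n rho (h : vec n -> ER) X U Z hX hZ :
  strongly_convex rho h -> subgrad h X U -> h X = Fin hX -> h Z = Fin hZ ->
  hX + dot U (vsub Z X) + rho / 2 * norm2 (vsub Z X) <= hZ.
Proof.
move=> Hsc [r [Hr Hsub]] HX HZ.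
rewrite HX in Hr; case: Hr => Er; subst r.
apply: (le_of_le_add_small (C := rho / 2 * norm2 (vsub Z X))) => t Ht.
have Hc := strong_convex_ineq Hsc HZ HX (ltac:(lra) : 0 <= t <= 1).
have := Hsub (vadd (vscale t Z) (vscale (1 - t) X)).
move: Hc; case: (h _) => [w||] //= Hc.
rewrite !dot_subr dot_addr !dot_scaler => Hs.
by apply: (Rmult_le_reg_l t); [lra | nra].
Qed.

Lemma strong_argmin_ineq n p (a : 'I_p -> vec n) b rho (g : vec n -> ER) U X Y gX gY :
  strongly_convex rho g -> g X = Fin gX -> g Y = Fin gY -> feasible a b X ->
  unique_argmin a b (fun z => ER_sub_real (g z) (dot U z)) Y ->
  gY - dot U Y + rho / 2 * norm2 (vsub Y X) <= gX - dot U X.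
Proof.
move=> Hsc HX HY HfX [HfY [Hmin _]].
have HN : norm2 (vsub X Y) = norm2 (vsub Y X) by rewrite !norm2_sub (dot_comm X); ring.
apply: (le_of_le_add_small (C := rho / 2 * norm2 (vsub Y X))) => t Ht.
have Hc := strong_convex_ineq Hsc HX HY (ltac:(lra) : 0 <= t <= 1).
have := Hmin _ (feasible_convex HfX HfY (ltac:(lra) : 0 <= t <= 1)).
move: Hc; rewrite HN HY; case: (g _) => [w||] //= Hc.
rewrite dot_addr !dot_scaler => Hm.
by apply: (Rmult_le_reg_l t); [lra | nra].
Qed.

(* Along D = Y - X, beyond Y, the increments of h are at least
   t (<U,D> + rho |D|^2): write Y as a convex combination of X and Y + t D
   and combine strong convexity with [strong_subgrad_ineq]. *)
Lemma strong_subgrad_ray n rho (h : vec n -> ER) X U Y hX hY t r :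
  0 <= rho -> strongly_convex rho h -> subgrad h X U ->
  h X = Fin hX -> h Y = Fin hY ->
  0 < t -> h (vadd Y (vscale t (vsub Y X))) = Fin r ->
  t * (dot U (vsub Y X) + rho * norm2 (vsub Y X)) <= r - hY.
Proof.
move=> Hrho Hsc Hsub HX HY Ht Hr.
have HXY := strong_subgrad_ineq Hsc Hsub HX HY.
have HN := norm2_ge0 (vsub Y X).
set s := t / (1 + t).
have Hs1 : s * (1 + t) = t by rewrite /s; field; lra.
have Hs2 : (1 - s) * (1 + t) = 1 by rewrite /s; field; lra.
have Hs : 0 <= s <= 1 by split; nra.
have Hc := strong_convex_ineq Hsc HX Hr Hs.
have Ecomb : vadd (vscale s X) (vscale (1 - s) (vadd Y (vscale t (vsub Y X)))) = Y.
  by apply: functional_extensionality => i; rewrite /s /vadd /vscale /vsub; field; lra.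
have Ediff : vsub X (vadd Y (vscale t (vsub Y X))) = vscale (- (1 + t)) (vsub Y X) by vec_ext.
rewrite Ecomb Ediff norm2_scale HY /= in Hc.
set D := vsub Y X in HXY HN Hc *.
have Hmix : (1 + t) * hY <= t * hX + r - rho / 2 * t * (1 + t) * norm2 D.
  have := Rmult_le_compat_l (1 + t) _ _ (ltac:(lra)) Hc.
  have -> : (1 + t) * (s * hX + (1 - s) * r
              - rho / 2 * s * (1 - s) * (- (1 + t) * - (1 + t) * norm2 D))
          = (s * (1 + t)) * hX + ((1 - s) * (1 + t)) * r
              - rho / 2 * (s * (1 + t)) * ((1 - s) * (1 + t)) * (1 + t) * norm2 D by ring.
  by rewrite Hs1 Hs2; lra.
have := Rmult_le_compat_l t _ _ (Rlt_le _ _ Ht) HXY.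
have : 0 <= rho * (t * t * norm2 D) by apply: Rmult_le_pos => //; nra.
nra.
Qed.

(* f is Frechet differentiable at y with value fy and gradient G; this is
   the pointwise clause of [C1_on_open_superset]. *)
Definition frechet_at n (f : vec n -> ER) (y : vec n) (fy : R) (G : vec n) : Prop :=
  forall eps, 0 < eps -> exists del, 0 < del /\ forall v, norm v < del ->
    exists r, f (vadd y v) = Fin r /\ Rabs (r - fy - dot G v) <= eps * norm v.

Lemma small_step_norm n (D : vec n) del t :
  0 < t < del / (norm D + 1) -> norm (vscale t D) < del.
Proof.
move=> Ht; have HnD := norm_ge0 D.
rewrite norm_scale Rabs_pos_eq; last lra.
have : t * (norm D + 1) < del.
  have -> : del = del / (norm D + 1) * (norm D + 1) by field; lra.
  by apply: Rmult_lt_compat_r; lra.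
nra.
Qed.

Lemma frechet_dir_deriv n (f : vec n -> ER) y fy G D :
  f y = Fin fy -> frechet_at f y fy G -> dir_deriv f y D (Fin (dot G D)).
Proof.
move=> Hfy Hd; exists fy; split => //; cbv zeta iota beta => eps Heps.
have HnD := norm_ge0 D.
set e := eps / (2 * (norm D + 1)).
have He : 0 < e by apply: Rdiv_lt_0_compat; lra.
have HeD : e * norm D < eps.
  have : e * (2 * (norm D + 1)) = eps by rewrite /e; field; lra.
  nra.
have [del [Hdel Hv]] := Hd e He.
exists (del / (norm D + 1)); split; first by apply: Rdiv_lt_0_compat; lra.
move=> t Ht.
have [r [Hr Habs]] := Hv _ (small_step_norm Ht).
rewrite Hr /=; exists ((r - fy) / t); split => //.
apply: (abs_quot_lt (k := e * norm D)) => //; first lra.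
move: Habs; rewrite norm_scale dot_scaler (Rabs_pos_eq t); lra.
Qed.

Lemma dir_deriv_ge n (f : vec n -> ER) y fy D l c :
  f y = Fin fy -> dir_deriv f y D (Fin l) ->
  (forall t r, 0 < t < 1 -> f (vadd y (vscale t D)) = Fin r -> t * c <= r - fy) ->
  c <= l.
Proof.
move=> Hfy [fy' [Hfy' Hq]] Hlb; rewrite Hfy in Hfy'; case: Hfy' => E; subst fy'.
apply: Rnot_lt_le => Hlc.
have [del [Hdel Hnear]] := Hq (c - l) (ltac:(lra)).
set t := Rmin (del / 2) (1 / 2).
have Ht : 0 < t by apply: Rmin_glb_lt; lra.
have Htd : t < del by have := Rmin_l (del / 2) (1 / 2); rewrite -/t; lra.
have Ht1 : t < 1 by have := Rmin_r (del / 2) (1 / 2); rewrite -/t; lra.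
have [q [/ER_quot_finE [r [Hr ->]] Hql]] := Hnear t (conj Ht Htd).
have /(div_le_iff _ _ Ht) := Hlb t r (conj Ht Ht1) Hr.
by move/Rabs_def2: Hql; lra.
Qed.

Lemma first_order_opt n p (a : 'I_p -> vec n) b (g : vec n -> ER) U X Y gY G :
  g Y = Fin gY -> frechet_at g Y gY G -> feasible a b X ->
  unique_argmin a b (fun z => ER_sub_real (g z) (dot U z)) Y ->
  dot G (vsub Y X) <= dot U (vsub Y X).
Proof.
move=> HY Hfr HfX [HfY [Hmin _]].
suff : dot U (vsub X Y) <= dot G (vsub X Y) by rewrite !dot_subr; lra.
apply: (dir_deriv_ge HY (frechet_dir_deriv _ HY Hfr)) => t r Ht Hr.
have Eseg : vadd Y (vscale t (vsub X Y)) = vadd (vscale t X) (vscale (1 - t) Y) by vec_ext.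
have := Hmin _ (feasible_convex HfX HfY (ltac:(lra) : 0 <= t <= 1)).
rewrite -Eseg Hr HY /= dot_addr dot_scaler.
lra.
Qed.

Lemma convex_quot_mono n (h : vec n -> ER) y D hy s t rt :
  proper_fun h -> convex_fun h -> h y = Fin hy -> 0 < s < t ->
  h (vadd y (vscale t D)) = Fin rt ->
  exists rs, h (vadd y (vscale s D)) = Fin rs /\ (rs - hy) * t <= (rt - hy) * s.
Proof.
move=> [Hnot_minf _] Hcvx Hy Hst Ht.
set l := s / t.
have Hlt : l * t = s by rewrite /l; field; lra.
have Hl : 0 <= l <= 1 by split; nra.
have := Hcvx (vadd y (vscale t D)) y rt hy l Hl; rewrite Ht Hy /= => /(_ (Rle_refl _) (Rle_refl _)).
have -> : vadd (vscale l (vadd y (vscale t D))) (vscale (1 - l) y) = vadd y (vscale s D).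
  by apply: functional_extensionality => i; rewrite /vadd /vscale -Hlt; ring.
have := Hnot_minf (vadd y (vscale s D)).
case: (h _) => [rs||] //= _ Hrs; exists rs; split => //.
have := Rmult_le_compat_r t _ _ (ltac:(lra)) Hrs.
have -> : (l * rt + (1 - l) * hy) * t = (l * t) * rt + (t - l * t) * hy by ring.
by rewrite Hlt; lra.
Qed.

(* A convex function whose difference quotients along D are bounded below
   by c has a directional derivative >= c: their infimum if some step is
   in the domain, +oo otherwise. *)
Lemma convex_dir_deriv n (h : vec n -> ER) y D hy c :
  proper_fun h -> convex_fun h -> h y = Fin hy ->
  (forall t r, 0 < t -> h (vadd y (vscale t D)) = Fin r -> t * c <= r - hy) ->
  exists L, dir_deriv h y D L /\ ER_le (Fin c) L.
Proof.
move=> Hprop Hcvx Hy Hlb.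
case: (classic (exists t0 r0, 0 < t0 /\ h (vadd y (vscale t0 D)) = Fin r0))
  => [[t0 [r0 [Ht0 Hr0]]] | Hinf]; last first.
  exists PInf; split => //; exists hy; split => //; cbv zeta iota beta => M.
  exists 1; split => [|t Ht]; first lra.
  case E: (h _) => [r||] /=; last by case: (proj1 Hprop _ E).
  - by case: Hinf; exists t, r; split => //; lra.
  - by split.
pose Q z := exists t r, 0 < t <= t0 /\ h (vadd y (vscale t D)) = Fin r /\ z = (r - hy) / t.
have Qne : exists z, Q z by exists ((r0 - hy) / t0), t0, r0; split => //; lra.
have Qlb : forall z, Q z -> c <= z.
  by move=> z [t [r [Ht [Hr ->]]]]; apply/(div_le_iff _ _ (proj1 Ht)); exact: Hlb (proj1 Ht) Hr.
have [m [Hcm [Hm Happrox]]] := glb_approx Qne Qlb.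
exists (Fin m); split => //; exists hy; split => //; cbv zeta iota beta => eps Heps.
have [_ [[t1 [r1 [Ht1 [Hr1 ->]]]] Hclose]] := Happrox eps Heps.
exists t1; split => [|t Ht]; first lra.
have [rt [Hrt Hmono]] := convex_quot_mono Hprop Hcvx Hy Ht Hr1.
rewrite Hrt /=; exists ((rt - hy) / t); split => //.
have Hqt := quot_le (proj1 Ht) (proj1 Ht1) Hmono.
have Hmq : m <= (rt - hy) / t by apply: Hm; exists t, rt; split => //; lra.
by apply: Rabs_def1; lra.
Qed.

Lemma dir_deriv_phi n (g h : vec n -> ER) y D lg L :
  dir_deriv g y D (Fin lg) -> dir_deriv h y D L -> L <> MInf ->
  dir_deriv (phi g h) y D (ER_minus (Fin lg) L).
Proof.
move=> [gy [Hgy Hg]] [hy [Hhy Hh]] HL.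
exists (gy - hy); split; first by rewrite /phi Hgy Hhy.
move: Hg Hh; cbv zeta iota beta => Hg Hh.
case: L HL Hh => [lh||] // _ Hh.
- move=> eps Heps.
  have [dg [Hdg Hg']] := Hg (eps / 2) (ltac:(lra)).
  have [dh [Hdh Hh']] := Hh (eps / 2) (ltac:(lra)).
  exists (Rmin dg dh); split => [|t Ht]; first exact: Rmin_glb_lt.
  have := Rmin_l dg dh; have := Rmin_r dg dh => Hmr Hml.
  have [qg [/ER_quot_finE [rg [Hrg ->]] Hqg]] := Hg' t (ltac:(lra)).
  have [qh [/ER_quot_finE [rh [Hrh ->]] Hqh]] := Hh' t (ltac:(lra)).
  rewrite /phi Hrg Hrh /=; eexists; split; first reflexivity.
  have -> : (rg - rh - (gy - hy)) / t = (rg - gy) / t - (rh - hy) / t by field; lra.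
  by move/Rabs_def2: Hqg; move/Rabs_def2: Hqh => *; apply: Rabs_def1; lra.
- move=> M.
  have [dg [Hdg Hg']] := Hg 1 Rlt_0_1.
  have [dh [Hdh Hh']] := Hh (lg + 1 - M).
  exists (Rmin dg dh); split => [|t Ht]; first exact: Rmin_glb_lt.
  have := Rmin_l dg dh; have := Rmin_r dg dh => Hmr Hml.
  have [qg [/ER_quot_finE [rg [Hrg ->]] /Rabs_def2 Hqg]] := Hg' t (ltac:(lra)).
  move: (Hh' t (ltac:(lra))); rewrite /phi Hrg.
  case: (h _) => [rh||] /= Hlt; [ | by split | by case: Hlt].
  apply: ER_lt_fin; have := ER_lt_finE Hlt.
  have -> : (rg - rh - (gy - hy)) / t = (rg - gy) / t - (rh - hy) / t by field; lra.
  lra.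
Qed.

Lemma dir_deriv_neg_quot n (f : vec n -> ER) y fy D L :
  f y = Fin fy -> dir_deriv f y D L -> ER_lt L (Fin 0) ->
  exists M del, M < 0 /\ 0 < del /\
    forall t, 0 < t < del -> ER_le (ER_quot (f (vadd y (vscale t D))) fy t) (Fin M).
Proof.
move=> Hfy [fy' [Hfy' Hq]]; rewrite Hfy in Hfy'; case: Hfy' => E; subst fy'.
move: Hq; cbv zeta iota beta.
case: L => [l||] Hq HL; last 2 first.
- by case: HL.
- have [del [Hdel Hbelow]] := Hq (-1).
  by exists (-1), del; split; [lra | split => // t /Hbelow []].
have Hl := ER_lt_finE HL.
have [del [Hdel Hnear]] := Hq (- l / 2) (ltac:(lra)).
exists (l / 2), del; split; first lra; split => // t Ht.
have [r [-> /Rabs_def2 Hr]] := Hnear t Ht.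
by rewrite /=; lra.
Qed.

Lemma descent_steps n (f : vec n -> ER) y fy D L c :
  f y = Fin fy -> dir_deriv f y D L -> ER_lt L (Fin 0) -> 0 <= c ->
  exists delta, 0 < delta /\ forall l, 0 <= l <= delta ->
    ER_le (f (vadd y (vscale l D))) (Fin (fy - c * l ^ 2)).
Proof.
move=> Hfy HL Hneg Hc.
have [M [del [HM [Hdel Hq]]]] := dir_deriv_neg_quot Hfy HL Hneg.
set delta := Rmin (del / 2) (- M / (c + 1)).
have Hdelta : 0 < delta by apply: Rmin_glb_lt; [lra | apply: Rdiv_lt_0_compat; lra].
exists delta; split => // l [Hl0 Hl].
case: (Req_dec l 0) => [->|Hlnz].
  by rewrite vscale0 Hfy /=; lra.
have Hld : l <= del / 2 by have := Rmin_l (del / 2) (- M / (c + 1)); rewrite -/delta; lra.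
have HlM : (c + 1) * l <= - M.
  apply/(div_le_iff _ _ (ltac:(lra) : 0 < c + 1)).
  by have := Rmin_r (del / 2) (- M / (c + 1)); rewrite -/delta; lra.
have Hql : ER_le (f (vadd y (vscale l D))) (Fin (fy + l * M)).
  by apply: ER_quot_le; [lra | apply: Hq; lra].
by apply: (ER_le_weaken Hql); nra.
Qed.

Lemma radius_and (P Q : R -> Prop) :
  (exists e, 0 < e /\ forall l, 0 <= l <= e -> P l) ->
  (exists e, 0 < e /\ forall l, 0 <= l <= e -> Q l) ->
  exists e, 0 < e /\ forall l, 0 <= l <= e -> P l /\ Q l.
Proof.
move=> [e1 [He1 HP]] [e2 [He2 HQ]].
exists (Rmin e1 e2); split => [|l Hl]; first exact: Rmin_glb_lt.
have := Rmin_l e1 e2; have := Rmin_r e1 e2 => *.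
by split; [apply: HP | apply: HQ]; lra.
Qed.

Lemma backtracking_terminates (P : R -> Prop) beta l0 :
  0 < beta < 1 -> (exists e, 0 < e /\ forall l, 0 <= l <= e -> P l) -> 0 <= l0 ->
  exists j : nat, P (beta ^ j * l0).
Proof.
move=> Hb [e [He HP]] Hl0.
have [N HN] := pow_lt_1_zero beta (ltac:(rewrite Rabs_pos_eq; lra)) (e / (l0 + 1))
  (ltac:(apply: Rdiv_lt_0_compat; lra)).
exists N; apply: HP.
have := HN N (le_n N); rewrite Rabs_pos_eq; last by apply: pow_le; lra.
have := pow_le beta N (ltac:(lra)).
move=> HbN Hsmall; have : beta ^ N * (l0 + 1) < e.
  have -> : e = e / (l0 + 1) * (l0 + 1) by field; lra.
  by apply: Rmult_lt_compat_r; lra.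
split; nra.
Qed.

(* If I(Y) is contained in I(X), a short segment from Y along Y - X stays
   in F: active constraints at Y are active at X, so D does not increase
   them, and inactive ones have positive slack. *)
Lemma feasible_segment n p (a : 'I_p -> vec n) b X Y :
  feasible a b Y -> active_subset a b Y X ->
  exists e, 0 < e /\ forall l, 0 <= l <= e -> feasible a b (vadd Y (vscale l (vsub Y X))).
Proof.
move=> HY Hact.
suff [e [He Hall]] : exists e, 0 < e /\ forall i l, 0 <= l <= e ->
    dot (a i) (vadd Y (vscale l (vsub Y X))) <= b i.
  by exists e; split => // l Hl i; apply: Hall.
apply: uniform_radius => i.
have E l : dot (a i) (vadd Y (vscale l (vsub Y X)))
           = dot (a i) Y + l * (dot (a i) Y - dot (a i) X).
  by rewrite dot_addr dot_scaler dot_subr.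
have HYi := HY i.
case: (Req_dec (dot (a i) Y) (b i)) => Hi.
  by exists 1; split => [|l _]; [lra | rewrite E Hi (Hact i Hi); lra].
case: (Rle_lt_dec (dot (a i) Y - dot (a i) X) 0) => Hs.
  by exists 1; split => [|l Hl]; [lra | rewrite E; nra].
exists ((b i - dot (a i) Y) / (dot (a i) Y - dot (a i) X)).
split => [|l [Hl0 /(div_le_iff _ _ Hs) Hl]]; first by apply: Rdiv_lt_0_compat; lra.
by rewrite E; lra.
Qed.

Lemma armijo_small_steps n (g h : vec n -> ER) rho alpha y D fy L :
  0 < rho -> 0 <= alpha -> phi g h y = Fin fy ->
  dir_deriv (phi g h) y D L -> ER_le L (Fin (- (rho * norm2 D))) ->
  exists delta, 0 < delta /\ forall l, 0 <= l <= delta -> accepted g h alpha y D l.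
Proof.
move=> Hrho Halpha Hfy HL HLe.
case: (classic (D = vzero)) => [->|HD].
  exists 1; split => [|l _]; first lra.
  rewrite /accepted.
  have -> : vadd y (vscale l vzero) = y by vec_ext.
  by rewrite Hfy norm2_zero Rmult_0_r /=; lra.
have HN := norm2_pos HD.
have Hneg : ER_lt L (Fin 0).
  case: L HL HLe => [l||] _ /= HLe; [apply: ER_lt_fin; nra | by [] | by split].
have [delta [Hd Hstep]] := descent_steps Hfy HL Hneg (ltac:(nra) : 0 <= alpha * norm2 D).
exists delta; split => // l /Hstep Hl.
rewrite /accepted Hfy.
by have -> : alpha * l ^ 2 * norm2 D = alpha * norm2 D * l ^ 2 by ring.
Qed.

Lemma argmin_finite n p (a : 'I_p -> vec n) b (g : vec n -> ER) U X Y gX :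
  proper_fun g -> feasible a b X -> g X = Fin gX ->
  unique_argmin a b (fun z => ER_sub_real (g z) (dot U z)) Y -> in_dom g Y.
Proof.
move=> Hpg HfX HgX [_ [Hmin _]].
have := Hmin X HfX; rewrite HgX.
case E: (g Y) => [r||] //= _; first by exists r.
by case: (proj1 Hpg _ E).
Qed.

Lemma dca_step_decrease n p (a : 'I_p -> vec n) b (g h : vec n -> ER) rho X U Y gX hX gY hY :
  strongly_convex rho g -> strongly_convex rho h -> subgrad h X U -> feasible a b X ->
  unique_argmin a b (fun z => ER_sub_real (g z) (dot U z)) Y ->
  g X = Fin gX -> h X = Fin hX -> g Y = Fin gY -> h Y = Fin hY ->
  ER_le (phi g h Y) (ER_sub_real (phi g h X) (rho * norm2 (vsub Y X))).
Proof.
move=> Hsg Hsh Hsub HfX Hmin HgX HhX HgY HhY.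
have Hh := strong_subgrad_ineq Hsh Hsub HhX HhY.
have Hg := strong_argmin_ineq Hsg HgX HgY HfX Hmin.
by rewrite /phi HgX HhX HgY HhY /=; move: Hh; rewrite dot_subr; lra.
Qed.

Lemma dca_step_dir_deriv n p (a : 'I_p -> vec n) b (g h : vec n -> ER) rho X U Y hX gY hY G :
  0 <= rho -> proper_fun h -> convex_fun h -> strongly_convex rho h ->
  subgrad h X U -> feasible a b X ->
  unique_argmin a b (fun z => ER_sub_real (g z) (dot U z)) Y ->
  h X = Fin hX -> g Y = Fin gY -> h Y = Fin hY -> frechet_at g Y gY G ->
  exists L, dir_deriv (phi g h) Y (vsub Y X) L /\ ER_le L (Fin (- (rho * norm2 (vsub Y X)))).
Proof.
move=> Hrho Hph Hch Hsh Hsub HfX Hmin HhX HgY HhY Hfr.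
have [Lh [HLh Hc]] := convex_dir_deriv
  (c := dot U (vsub Y X) + rho * norm2 (vsub Y X)) Hph Hch HhY
  (fun t r Ht Hr => strong_subgrad_ray Hrho Hsh Hsub HhX HhY Ht Hr).
have Hopt := first_order_opt HgY Hfr HfX Hmin.
exists (ER_minus (Fin (dot G (vsub Y X))) Lh); split.
  by apply: dir_deriv_phi (frechet_dir_deriv _ HgY Hfr) HLh _ => HM; rewrite HM in Hc.
by case: Lh {HLh} Hc => [l||] //= Hc; lra.
Qed.

Section BDCARun.
Variables (n p : nat) (a : 'I_p -> vec n) (b : 'I_p -> R) (g h : vec n -> ER).
Variables (alpha beta : R) (x u y : nat -> vec n) (lam lam0 : nat -> R).
Hypothesis Hbeta : 0 < beta < 1.
Hypothesis Hrun : bdca_run a b g h alpha beta x u y lam lam0.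

(* Every iterate is feasible: x_{k+1} is y_k, or a convex combination of
   y_k and the feasible trial point y_k + lam0_k d_k. *)
Lemma iterates_feasible k : feasible a b (x k).
Proof.
case: k => [|k]; first exact: proj1 Hrun.
have := proj2 Hrun k; cbv zeta => [[_ [_ [[HyF _] [Hstop Hmove]]]]].
case: (classic (vsub (y k) (x k) = vzero)) => HD; first by rewrite Hstop // -(vsub_eq0 HD).
have [Hact [Hinact ->]] := Hmove HD.
case: (classic (active_subset a b (y k) (x k))) => HA; last by rewrite (Hinact HA) vscale0.
have [_ [Hf0 [j [-> _]]]] := Hact HA.
have Hb01 : 0 <= beta <= 1 by lra.
have Hbj := pow_unit_interval j Hb01.
have -> : vadd (y k) (vscale (beta ^ j * lam0 k) (vsub (y k) (x k)))
  = vadd (vscale (beta ^ j) (vadd (y k) (vscale (lam0 k) (vsub (y k) (x k)))))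
         (vscale (1 - beta ^ j) (y k)) by vec_ext.
exact: feasible_convex.
Qed.

(* y_k lies in dom h: otherwise phi(y_k) = -oo, contradicting that
   x_{k+1} in dom h passes the Armijo test, or x_{k+1} = y_k itself. *)
Lemma argmin_in_dom_h k :
  proper_fun h -> (forall z, in_dom h z -> in_dom g z) -> in_dom g (y k) -> in_dom h (y k).
Proof.
move=> Hph Hgdom [gY HgY].
have := proj2 Hrun k; cbv zeta => [[HhX [_ [_ [_ Hmove]]]]].
have HhX1 : in_dom h (x k.+1) by have := proj2 Hrun k.+1; cbv zeta => [[]].
case: (classic (vsub (y k) (x k) = vzero)) => [/vsub_eq0 -> // | HD].
have [Hact [Hinact Hnext]] := Hmove HD.
case: (classic (active_subset a b (y k) (x k))) => HA; last first.
  by move: HhX1; rewrite Hnext (Hinact HA) vscale0.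
have [_ [_ [j [_ [Hacc _]]]]] := Hact HA.
have [[gS HgS] [hS HhS]] := (Hgdom _ HhX1, HhX1).
move: Hacc; rewrite /accepted -Hnext /phi HgS HhS HgY.
case E: (h (y k)) => [r||] //= _; first by exists r.
by case: (proj1 Hph _ E).
Qed.

End BDCARun.

Theorem proposition3p2 (n p : nat) (a : 'I_p -> vec n) (b : 'I_p -> R)
  (g h : vec n -> ER) (rho alpha beta : R)
  (x u y : nat -> vec n) (lam lam0 : nat -> R) :
  (* g, h proper, closed, convex *)
  proper_fun g -> proper_fun h -> closed_fun g -> closed_fun h ->
  convex_fun g -> convex_fun h ->
  (* A1 *)
  0 < rho -> strongly_convex rho g -> strongly_convex rho h ->
  (* A2 *)
  (forall z, in_dom h z -> exists v, subgrad h z v) ->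
  C1_on_open_superset g (in_dom h) ->
  (exists M : R, forall z, feasible a b z -> ER_le (Fin M) (phi g h z)) ->
  (* algorithm parameters and run *)
  0 < alpha -> 0 < beta < 1 ->
  bdca_run a b g h alpha beta x u y lam lam0 ->
  forall k : nat,
    let d := vsub (y k) (x k) in
    (* (i) *)
    ER_le (phi g h (y k)) (ER_sub_real (phi g h (x k)) (rho * norm2 d)) /\
    (* (ii) *)
    (exists L, dir_deriv (phi g h) (y k) d L /\ ER_le L (Fin (- (rho * norm2 d)))) /\
    (* (iii) *)
    (active_subset a b (y k) (x k) ->
       (exists delta, 0 < delta /\
          forall l, 0 <= l <= delta ->
            feasible a b (vadd (y k) (vscale l d)) /\ accepted g h alpha (y k) d l) /\
       (forall l0, 0 <= l0 -> feasible a b (vadd (y k) (vscale l0 d)) ->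
          exists j : nat, accepted g h alpha (y k) d (beta ^ j * l0))).
Proof.
move=> Hpg Hph _ _ _ Hch Hrho Hsg Hsh _ [V [grad [_ [HsubV [Hdiff _]]]]] _
  Halpha Hbeta Hrun k; cbv zeta.
have Hfr z : in_dom h z -> exists r, g z = Fin r /\ frechet_at g z r (grad z).
  by move=> Hz; exact: Hdiff z (HsubV z Hz).
have Hgdom z : in_dom h z -> in_dom g z by move=> /Hfr [r [Hr _]]; exists r.
have := proj2 Hrun k; cbv zeta => [[[hX HhX] [Hsub [Hmin _]]]].
have HfX := iterates_feasible Hbeta Hrun k.
have [gX [HgX _]] := Hfr _ (ex_intro _ hX HhX).
have [gY HgY] := argmin_finite Hpg HfX HgX Hmin.
have [hY HhY] := argmin_in_dom_h Hrun Hph Hgdom (ex_intro _ gY HgY).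
have [gY' [HgY' HfrY]] := Hfr _ (ex_intro _ hY HhY).
rewrite HgY in HgY'; case: HgY' => E; subst gY'.
have Hderiv := dca_step_dir_deriv (Rlt_le _ _ Hrho) Hph Hch Hsh Hsub HfX Hmin HhX HgY HhY HfrY.
split; first exact: dca_step_decrease Hsg Hsh Hsub HfX Hmin HgX HhX HgY HhY.
split => // Hact.
have [L [HL HLe]] := Hderiv.
have HphiY : phi g h (y k) = Fin (gY - hY) by rewrite /phi HgY HhY.
have Hsteps := radius_and (feasible_segment (proj1 Hmin) Hact)
  (armijo_small_steps Hrho (Rlt_le _ _ Halpha) HphiY HL HLe).
split => // l0 Hl0 _.
have [j [_ Hj]] := backtracking_terminates Hbeta Hsteps Hl0.
by exists j.
Qed.
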